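(* Let $(M,F)$ be a conic pseudo-Finsler surface and $\overline F=e^\phi F$ an anisotropic conformal change. Then $$\phi_{;2}P+P_{;2}+\varepsilon\phi_{;2}Q_{;2}-(\mathcal I\phi_{;2}+1)Q-F^2\phi_{,2}=0.$$
   Context: Throughout, $M$ is a smooth $2$-dimensional manifold, $TM_0$ its slit tangent bundle with induced local coordinates $(x^i,y^i)$, $\partial_i=\partial/\partial x^i$, $\dot\partial_i=\partial/\partial y^i$. A function is called $h(r)$ if it is positively homogeneous of degree $r$ in $y$. A conic pseudo-Finsler surface $(M,F)$ consists of a conic subbundle $\mathcal A\subset TM_0$ (an open set invariant under $y\mapsto\lambda y$, $\lambda>0$, projecting onto $M$) and a smooth $h(1)$ function $F:\mathcal A\to\mathbb R$ such that $g_{ij}=\frac12\dot\partial_i\dot\partial_jF^2$ is nondegenerate. Put $\ell_i=\dot\partial_iF$, $\ell^i=y^i/F$. Modified Berwald frame: $\varepsilon\in\{1,-1\}$ and a covector $m_i$ satisfy $g_{ij}=\ell_i\ell_j+\varepsilon m_im_j$, $m^i=g^{ij}m_j$, so $\ell^i\ell_i=1$, $\ell^im_i=0$, $m^im_i=\varepsilon$. The main scalar $\mathcal I$ ($h(0)$) is defined by $FC_{ijk}=\mathcal I\,m_im_jm_k$, where $C_{ijk}=\frac14\dot\partial_i\dot\partial_j\dot\partial_kF^2$. The geodesic spray of $F$ is $S=y^i\partial_i-2G^i\dot\partial_i$; $G^i_j=\dot\partial_jG^i$, $\delta_i=\partial_i-G^j_i\dot\partial_j$. For a smooth function $f$: $f_{;1}=y^i\dot\partial_if$,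 $f_{;2}=\varepsilon Fm^i\dot\partial_if$, $f_{,1}=\ell^i\delta_if$, $f_{,2}=\varepsilon m^i\delta_if$; iterated derivatives are read left to right, e.g. $f_{,1;2}=(f_{,1})_{;2}$. Anisotropic conformal change: $\phi$ is a smooth $h(0)$ function on $\mathcal A$ with $F^2(\dot\partial_i\dot\partial_j\phi+\dot\partial_i\phi\,\dot\partial_j\phi)m^im^j+\varepsilon\ne0$, and $\overline F=e^{\phi}F$. Set $\sigma=\phi_{;2;2}+\varepsilon\mathcal I\phi_{;2}+2(\phi_{;2})^2$, $\rho=1/(\sigma+\varepsilon-(\phi_{;2})^2)$, $2Q=\varepsilon\rho F^2(\phi_{;2}\phi_{,1}+\phi_{,1;2}-2\phi_{,2})$, $2P=-\rho F^2\phi_{;2}(\phi_{;2}\phi_{,1}+\phi_{,1;2}-2\phi_{,2})+F^2\phi_{,1}$. *)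

From Stdlib Require Import Reals.
From Coquelicot Require Import Coquelicot.
Open Scope R_scope.

(* Local picture: a chart x = (x^1,x^2) of M and induced coordinates
   (x^1,x^2,y^1,y^2) on TM.  A point of TM is ((x1,x2),(y1,y2)).
   Index convention: i = 0,1 stand for the paper's indices 1,2. *)
Definition pt := ((R * R) * (R * R))%type.

Definition coord (z : pt) (k : nat) : R :=
  match k with
  | 0 => fst (fst z) | 1 => snd (fst z) | 2 => fst (snd z) | _ => snd (snd z)
  end.

Definition upd (z : pt) (k : nat) (t : R) : pt :=
  match k with
  | 0 => ((t, snd (fst z)), snd z)
  | 1 => ((fst (fst z), t), snd z)
  | 2 => (fst z, (t, snd (snd z)))
  | _ => (fst z, (fst (snd z), t))
  end.

Definition pd (k : nat) (f : pt -> R) (z : pt) : R :=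
  Derive (fun t => f (upd z k t)) (coord z k).

Definition dx (i : nat) (f : pt -> R) : pt -> R := pd i f.
Definition dy (i : nat) (f : pt -> R) : pt -> R := pd (2 + i) f.
Definition yc (z : pt) (i : nat) : R := coord z (2 + i).

Definition sum2 (f : nat -> R) : R := f 0%nat + f 1%nat.

Fixpoint Ck (n : nat) (A : pt -> Prop) (f : pt -> R) : Prop :=
  (forall z, A z -> continuous f z) /\
  match n with
  | 0 => True
  | S n' => forall k, (k < 4)%nat ->
      (forall z, A z -> ex_derive (fun t => f (upd z k t)) (coord z k)) /\
      Ck n' A (pd k f)
  end.
Definition smooth_on (A : pt -> Prop) (f : pt -> R) : Prop := forall n, Ck n A f.

Definition scale (l : R) (z : pt) : pt := (fst z, (l * fst (snd z), l * snd (snd z))).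

Definition conic (A : pt -> Prop) : Prop :=
  open A /\ (forall z, A z -> snd z <> (0, 0)) /\
  (forall z l, A z -> 0 < l -> A (scale l z)).

Definition homog (r : nat) (A : pt -> Prop) (f : pt -> R) : Prop :=
  forall z l, A z -> 0 < l -> f (scale l z) = l ^ r * f z.

Section Finsler.
Variable F : pt -> R.
Variable eps : R.
Variable m : nat -> pt -> R.

Definition F2 : pt -> R := fun z => F z ^ 2.
Definition g (i j : nat) : pt -> R := fun z => / 2 * dy i (dy j F2) z.
Definition detg (z : pt) : R := g 0 0 z * g 1 1 z - g 0 1 z * g 1 0 z.
Definition ginv (i j : nat) (z : pt) : R :=
  match i, j with
  | 0, 0 => g 1 1 z / detg z
  | 1, 1 => g 0 0 z / detg z
  | _, _ => - g i j z / detg z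
  end.
Definition ell (i : nat) : pt -> R := dy i F.
Definition ellu (i : nat) (z : pt) : R := yc z i / F z.
Definition Cijk (i j k : nat) : pt -> R :=
  fun z => / 4 * dy i (dy j (dy k F2)) z.
Definition mu (i : nat) (z : pt) : R := sum2 (fun j => ginv i j z * m j z).

(* geodesic spray coefficients G^i *)
Definition Gs (i : nat) (z : pt) : R :=
  / 4 * sum2 (fun l => ginv i l z *
     (sum2 (fun k => yc z k * dx k (dy l F2) z) - dx l F2 z)).
Definition Gji (j i : nat) : pt -> R := dy i (Gs j).
Definition delta (i : nat) (f : pt -> R) (z : pt) : R :=
  dx i f z - sum2 (fun j => Gji j i z * dy j f z).

Definition dv1 (f : pt -> R) (z : pt) : R := sum2 (fun i => yc z i * dy i f z).          (* f_{;1} *)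
Definition dv2 (f : pt -> R) (z : pt) : R := eps * F z * sum2 (fun i => mu i z * dy i f z). (* f_{;2} *)
Definition dh1 (f : pt -> R) (z : pt) : R := sum2 (fun i => ellu i z * delta i f z).     (* f_{,1} *)
Definition dh2 (f : pt -> R) (z : pt) : R := eps * sum2 (fun i => mu i z * delta i f z). (* f_{,2} *)

Variable I : pt -> R.
Variable phi : pt -> R.

Definition sigma (z : pt) : R :=
  dv2 (dv2 phi) z + eps * I z * dv2 phi z + 2 * (dv2 phi z) ^ 2.
Definition rho (z : pt) : R := / (sigma z + eps - (dv2 phi z) ^ 2).
Definition Qc (z : pt) : R :=
  / 2 * (eps * rho z * F z ^ 2 *
         (dv2 phi z * dh1 phi z + dv2 (dh1 phi) z - 2 * dh2 phi z)).
Definition Pc (z : pt) : R :=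
  / 2 * (- rho z * F z ^ 2 * dv2 phi z *
           (dv2 phi z * dh1 phi z + dv2 (dh1 phi) z - 2 * dh2 phi z)
         + F z ^ 2 * dh1 phi z).

End Finsler.

(* Euler's theorem for the h(0) function [phi] gives [y^i d phi / d y^i = 0], and
   differentiating it for the h(2) function [F^2] together with [g = l l + eps m m] gives
   [y^i m_i = 0]; in dimension two the vertical gradient of [phi] is therefore parallel to
   [m], namely [d phi / d y^i = eps (m^j d phi / d y^j) m_i].  Contracting
   [F C_ijk = I m_i m_j m_k] with [m^i m^j m^k] yields [F m^k m^i d m_i / d y^k = eps I], and
   these two facts give [phi_;2;2 = F^2 m^i m^j d^2 phi / d y^i d y^j - eps I phi_;2].  Hence
   [sigma + eps - phi_;2^2 = F^2 (d^2 phi + d phi (x) d phi)(m^., m^.) + eps], which is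
   nonzero by hypothesis, so [rho] and [Q] are differentiable.  Finally
   [P = - eps phi_;2 Q + F^2 phi_,1 / 2] and [(F^2)_;2 = 0], so the product rule turns the
   left-hand side into [- eps Q / rho + F^2 (phi_;2 phi_,1 + phi_,1;2 - 2 phi_,2) / 2],
   which is zero by the definition of [Q]. *)

From Pilot Require Import Defs.
From Stdlib Require Import Reals Lra Lia.
From Coquelicot Require Import Coquelicot.
Open Scope R_scope.

Lemma continuous_pair {T U V : UniformSpace} (f : T -> U) (g : T -> V) x :
  continuous f x -> continuous g x -> continuous (fun t => (f t, g t)) x.
Proof.
  intros Hf Hg. apply (continuous_comp_2 f g pair); auto.
  apply continuous_ext with (f := fun p : U * V => p); [now intros [a b]|].
  apply continuous_id.
Qed.

Lemma continuous_coord (z : pt) k : continuous (fun w : pt => coord w k) z.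
Proof.
  destruct z as [[a b] [c d]].
  destruct k as [|[|[|k]]]; simpl.
  - apply (continuous_comp fst fst); [apply continuous_fst | apply continuous_fst].
  - apply (continuous_comp fst snd); [apply continuous_fst | apply continuous_snd].
  - apply (continuous_comp snd fst); [apply continuous_snd | apply continuous_fst].
  - apply (continuous_comp snd snd); [apply continuous_snd | apply continuous_snd].
Qed.

Lemma continuous_upd (z : pt) k t0 : continuous (fun t => upd z k t) t0.
Proof.
  destruct k as [|[|[|k]]]; simpl;
    repeat first [ apply continuous_pair | apply continuous_id | apply continuous_const ].
Qed.

Lemma upd_coord z k : upd z k (coord z k) = z.
Proof. destruct z as [[a b] [c d]]; destruct k as [|[|[|[|k]]]]; reflexivity. Qed.

Lemma coord_upd_cases k j :
  (forall z t, coord (upd z k t) j = t) \/ (forall z t, coord (upd z k t) j = coord z j).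
Proof.
  destruct k as [|[|[|[|k]]]], j as [|[|[|[|j]]]];
    first [ left; intros [[? ?] [? ?]] t; reflexivity
          | right; intros [[? ?] [? ?]] t; reflexivity ].
Qed.

(* [coord] and [upd] read every index [k >= 3] as [y^2]. *)
Lemma pd_ge3 k (f : pt -> R) : (3 <= k)%nat -> pd k f = pd 3 f.
Proof. intros Hk. destruct k as [|[|[|[|k]]]]; solve [lia | reflexivity]. Qed.

Definition ex_pd (k : nat) (f : pt -> R) (z : pt) : Prop :=
  ex_derive (fun t => f (upd z k t)) (coord z k).

Section SmoothCalculus.

Variable A : pt -> Prop.
Hypothesis A_open : open A.

Lemma locally_upd z k : A z -> locally (coord z k) (fun t => A (upd z k t)).
Proof.
  intros Hz. pose proof (continuous_upd z k (coord z k)) as Hc.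
  unfold continuous in Hc. rewrite upd_coord in Hc. exact (Hc A (A_open z Hz)).
Qed.

Lemma pd_ext_on (f g : pt -> R) k z : A z ->
  (forall w, A w -> f w = g w) -> pd k f z = pd k g z.
Proof.
  intros Hz Hfg. apply Derive_ext_loc.
  apply (filter_imp (fun t => A (upd z k t))); [auto|apply locally_upd; auto].
Qed.

Lemma ex_pd_ext_on (f g : pt -> R) k z : A z ->
  (forall w, A w -> f w = g w) -> ex_pd k f z -> ex_pd k g z.
Proof.
  intros Hz Hfg. apply ex_derive_ext_loc.
  apply (filter_imp (fun t => A (upd z k t))); [auto|apply locally_upd; auto].
Qed.

Lemma continuous_ext_on (f g : pt -> R) z : A z ->
  (forall w, A w -> f w = g w) -> continuous f z -> continuous g z.
Proof.
  intros Hz Hfg. apply continuous_ext_loc.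
  apply (filter_imp A); [auto|apply A_open; auto].
Qed.

Lemma Ck_ext n (f g : pt -> R) :
  (forall w, A w -> f w = g w) -> Ck n A f -> Ck n A g.
Proof.
  revert f g. induction n as [|n IH]; intros f g Hfg [Hc Hpd];
    (split; [intros z Hz; apply (continuous_ext_on f); auto|]); [exact I|].
  intros k Hk. destruct (Hpd k Hk) as [Hex Hn]. split.
  - intros z Hz. exact (ex_pd_ext_on f g k z Hz Hfg (Hex z Hz)).
  - apply (IH (pd k f)); auto. intros w Hw. apply pd_ext_on; auto.
Qed.

Lemma Ck_S n (f : pt -> R) : Ck (S n) A f -> Ck n A f.
Proof.
  revert f. induction n as [|n IH]; intros f [Hc Hpd]; split; auto.
  intros k Hk. destruct (Hpd k Hk) as [Hex Hn]. auto.
Qed.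

Lemma Ck_plus n (f g : pt -> R) :
  Ck n A f -> Ck n A g -> Ck n A (fun w => f w + g w).
Proof.
  revert f g. induction n as [|n IH]; intros f g [Hcf Hf] [Hcg Hg];
    (split; [intros z Hz; exact (continuous_plus f g z (Hcf z Hz) (Hcg z Hz))|]);
    [exact I|].
  intros k Hk. destruct (Hf k Hk) as [Hexf Hnf], (Hg k Hk) as [Hexg Hng]. split.
  - intros z Hz. apply (ex_derive_plus (fun t => f (upd z k t)) (fun t => g (upd z k t))); auto.
  - apply (Ck_ext n (fun w => pd k f w + pd k g w)); auto.
    intros w Hw. unfold pd. rewrite Derive_plus; auto.
Qed.

Lemma Ck_mult n (f g : pt -> R) :
  Ck n A f -> Ck n A g -> Ck n A (fun w => f w * g w).
Proof.
  revert f g. induction n as [|n IH]; intros f g Hf' Hg';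
    destruct Hf' as [Hcf Hf], Hg' as [Hcg Hg];
    (split; [intros z Hz; exact (continuous_mult f g z (Hcf z Hz) (Hcg z Hz))|]);
    [exact I|].
  intros k Hk. destruct (Hf k Hk) as [Hexf Hnf], (Hg k Hk) as [Hexg Hng]. split.
  - intros z Hz. apply (ex_derive_mult (fun t => f (upd z k t)) (fun t => g (upd z k t))); auto.
  - apply (Ck_ext n (fun w => pd k f w * g w + f w * pd k g w)).
    + intros w Hw. unfold pd. rewrite Derive_mult, !upd_coord; auto.
    + apply Ck_plus; apply IH; auto; apply Ck_S; split; auto.
Qed.

Lemma Ck_const n c : Ck n A (fun _ => c).
Proof.
  revert c. induction n as [|n IH]; intros c;
    (split; [intros; apply continuous_const|]); [exact I|].
  intros k Hk. split; [intros; apply ex_derive_const|].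
  apply (Ck_ext n (fun _ => 0)); [|apply IH].
  intros w _. unfold pd. rewrite Derive_const. reflexivity.
Qed.

Lemma Ck_coord n j : Ck n A (fun w => coord w j).
Proof.
  destruct n as [|n]; (split; [intros; apply continuous_coord|]); [exact I|].
  intros k Hk. destruct (coord_upd_cases k j) as [Hc|Hc]; split.
  - intros z Hz. apply (ex_derive_ext (fun t => t)); [intros; rewrite Hc; auto|].
    apply ex_derive_id.
  - apply (Ck_ext n (fun _ => 1)); [|apply Ck_const].
    intros w _. unfold pd. rewrite (Derive_ext _ (fun t => t)); [|intros; rewrite Hc; auto].
    symmetry. apply Derive_id.
  - intros z Hz. apply (ex_derive_ext (fun t => coord z j)); [intros; rewrite Hc; auto|].
    apply ex_derive_const.
  - apply (Ck_ext n (fun _ => 0)); [|apply Ck_const].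
    intros w _. unfold pd. rewrite (Derive_ext _ (fun t => coord w j)); [|intros; rewrite Hc; auto].
    rewrite Derive_const. reflexivity.
Qed.

Lemma Ck_inv n (f : pt -> R) :
  (forall w, A w -> f w <> 0) -> Ck n A f -> Ck n A (fun w => / f w).
Proof.
  intros Hnz. revert f Hnz. induction n as [|n IH]; intros f Hnz [Hcf Hf];
    (split; [intros z Hz; apply (continuous_comp f Rinv); [auto|apply continuous_Rinv; auto]|]);
    [exact I|].
  intros k Hk. destruct (Hf k Hk) as [Hexf Hnf]. split.
  - intros z Hz. apply (ex_derive_inv (fun t => f (upd z k t))); auto.
    rewrite upd_coord; auto.
  - apply (Ck_ext n (fun w => (-1) * pd k f w * (/ f w * / f w))).
    + intros w Hw. unfold pd. rewrite Derive_inv, !upd_coord; auto.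
      * field. auto.
      * rewrite upd_coord; auto.
    + assert (Hinv : Ck n A (fun w => / f w)) by (apply IH; auto; apply Ck_S; split; auto).
      repeat apply Ck_mult; auto using Ck_const.
Qed.

Lemma smooth_on_ext (f g : pt -> R) :
  (forall w, A w -> f w = g w) -> smooth_on A f -> smooth_on A g.
Proof. intros Hfg Hf n. apply (Ck_ext n f); auto. Qed.

Lemma smooth_on_plus (f g : pt -> R) :
  smooth_on A f -> smooth_on A g -> smooth_on A (fun w => f w + g w).
Proof. intros Hf Hg n. apply Ck_plus; auto. Qed.

Lemma smooth_on_mult (f g : pt -> R) :
  smooth_on A f -> smooth_on A g -> smooth_on A (fun w => f w * g w).
Proof. intros Hf Hg n. apply Ck_mult; auto. Qed.

Lemma smooth_on_const c : smooth_on A (fun _ => c).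
Proof. intros n. apply Ck_const. Qed.

Lemma smooth_on_inv (f : pt -> R) :
  (forall w, A w -> f w <> 0) -> smooth_on A f -> smooth_on A (fun w => / f w).
Proof. intros Hnz Hf n. apply Ck_inv; auto. Qed.

Lemma smooth_on_yc i : smooth_on A (fun w => yc w i).
Proof. intros n. apply Ck_coord. Qed.

Lemma smooth_on_opp (f : pt -> R) : smooth_on A f -> smooth_on A (fun w => - f w).
Proof.
  intros Hf. apply (smooth_on_ext (fun w => (-1) * f w)); [intros; ring|].
  apply smooth_on_mult; auto using smooth_on_const.
Qed.

Lemma smooth_on_minus (f g : pt -> R) :
  smooth_on A f -> smooth_on A g -> smooth_on A (fun w => f w - g w).
Proof. intros Hf Hg. apply smooth_on_plus; auto using smooth_on_opp. Qed.

Lemma smooth_on_pow (f : pt -> R) n : smooth_on A f -> smooth_on A (fun w => f w ^ n).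
Proof.
  intros Hf. induction n as [|n IH]; simpl; auto using smooth_on_const, smooth_on_mult.
Qed.

Lemma smooth_on_pd (f : pt -> R) k : smooth_on A f -> smooth_on A (pd k f).
Proof.
  intros Hf n. destruct (Nat.lt_ge_cases k 4) as [Hk|Hk].
  - apply (proj2 (Hf (S n)) k Hk).
  - rewrite pd_ge3 by lia. apply (proj2 (Hf (S n)) 3%nat); lia.
Qed.

Lemma smooth_on_ex_pd (f : pt -> R) k z : smooth_on A f -> A z -> ex_pd k f z.
Proof.
  intros Hf Hz. destruct (Nat.lt_ge_cases k 4) as [Hk|Hk].
  - apply (proj2 (Hf 1%nat) k Hk); auto.
  - unfold ex_pd. destruct k as [|[|[|[|k]]]]; try lia.
    apply (proj2 (Hf 1%nat) 3%nat); auto.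
Qed.

Lemma smooth_on_continuous (f : pt -> R) z : smooth_on A f -> A z -> continuous f z.
Proof. intros Hf Hz. apply (proj1 (Hf 0%nat)); auto. Qed.

End SmoothCalculus.

(* Continuity of the partials makes [f] jointly differentiable in [y]. *)
Lemma smooth_on_differentiable_y (A : pt -> Prop) (f : pt -> R) b y0 y1 :
  open A -> smooth_on A f -> A (b, (y0, y1)) ->
  differentiable_pt_lim (fun u v => f (b, (u, v))) y0 y1
    (pd 2 f (b, (y0, y1))) (pd 3 f (b, (y0, y1))).
Proof.
  intros HA Hf Hz.
  assert (Hloc : locally (y0, y1) (fun u : R * R => A (b, u))).
  { exact (continuous_pair (fun _ : R * R => b) (fun u => u) (y0, y1)
             (continuous_const _ _) (continuous_id _) A (HA _ Hz)). }
  apply (proj1 (filterdiff_differentiable_pt_lim _ _ _ _ _)).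
  eapply filterdiff_ext_lin.
  apply (is_derive_filterdiff (fun u v => f (b, (u, v))) y0 y1 (fun u v => pd 2 f (b, (u, v)))).
  - apply (filter_imp (fun u => A (b, u))); [|exact Hloc].
    intros [u1 u2] Hu.
    exact (Derive_correct _ _ (smooth_on_ex_pd A f 2 (b, (u1, u2)) Hf Hu)).
  - exact (Derive_correct _ _ (smooth_on_ex_pd A f 3 (b, (y0, y1)) Hf Hz)).
  - apply (continuous_comp (fun u : R * R => (b, (fst u, snd u))) (pd 2 f)).
    + apply continuous_pair; [apply continuous_const|].
      apply continuous_pair; [apply continuous_fst|apply continuous_snd].
    + apply (smooth_on_continuous A); auto. apply smooth_on_pd; auto.
  - intros [u1 u2]. reflexivity.
Qed.

(* Differentiate [f (l y) = l^r f y] at [l = 1]. *)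
Lemma homog_euler (A : pt -> Prop) (f : pt -> R) r z :
  conic A -> smooth_on A f -> homog r A f -> A z ->
  yc z 0 * dy 0 f z + yc z 1 * dy 1 f z = INR r * f z.
Proof.
  intros [HA _] Hf Hh Hz.
  destruct z as [b [y0 y1]].
  set (f2 := fun u v => f (b, (u, v))).
  assert (Hdiff : differentiable_pt_lim f2 (1 * y0) (1 * y1)
                    (pd 2 f (b, (y0, y1))) (pd 3 f (b, (y0, y1)))).
  { rewrite !Rmult_1_l. exact (smooth_on_differentiable_y A f b y0 y1 HA Hf Hz). }
  assert (H0 : derivable_pt_lim (fun l => l * y0) 1 y0).
  { apply is_derive_Reals. auto_derive; auto; ring. }
  assert (H1 : derivable_pt_lim (fun l => l * y1) 1 y1).
  { apply is_derive_Reals. auto_derive; auto; ring. }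
  pose proof (derivable_pt_lim_comp_2d f2 (fun l => l * y0) (fun l => l * y1) 1 _ _ _ _
                Hdiff H0 H1) as Hc.
  apply is_derive_Reals, is_derive_unique in Hc.
  assert (Hp : is_derive (fun l => l ^ r * f (b, (y0, y1))) 1 (INR r * f (b, (y0, y1)))).
  { auto_derive; auto. rewrite pow1. ring. }
  apply is_derive_unique in Hp.
  assert (Hscale : Derive (fun t => f2 (t * y0) (t * y1)) 1
                   = Derive (fun l => l ^ r * f (b, (y0, y1))) 1).
  { apply Derive_ext_loc.
    apply (filter_imp (fun l => 0 < l)); [intros l Hl; exact (Hh _ l Hz Hl)|].
    apply (open_gt 0 1 Rlt_0_1). }
  assert (E : pd 2 f (b, (y0, y1)) * y0 + pd 3 f (b, (y0, y1)) * y1 = INR r * f (b, (y0, y1)))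
    by (rewrite <- Hc, <- Hp; exact Hscale).
  unfold yc, dy. simpl. rewrite <- E. ring.
Qed.

Lemma pd_mult k (f g : pt -> R) z : ex_pd k f z -> ex_pd k g z ->
  pd k (fun w => f w * g w) z = pd k f z * g z + f z * pd k g z.
Proof. intros Hf Hg. unfold pd. rewrite Derive_mult, upd_coord; auto. Qed.

Lemma pd_plus k (f g : pt -> R) z : ex_pd k f z -> ex_pd k g z ->
  pd k (fun w => f w + g w) z = pd k f z + pd k g z.
Proof. intros Hf Hg. unfold pd. rewrite Derive_plus; auto. Qed.

Lemma pd_scal k c (f : pt -> R) z : pd k (fun w => c * f w) z = c * pd k f z.
Proof. unfold pd. apply Derive_scal. Qed.

Lemma pd_sqr k (f : pt -> R) z : ex_pd k f z ->
  pd k (fun w => f w ^ 2) z = 2 * f z * pd k f z.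
Proof. intros Hf. unfold pd. rewrite Derive_pow, upd_coord; auto. simpl. ring. Qed.

Lemma ex_pd_mult k (f g : pt -> R) z :
  ex_pd k f z -> ex_pd k g z -> ex_pd k (fun w => f w * g w) z.
Proof. apply (ex_derive_mult (fun t => f (upd z k t)) (fun t => g (upd z k t))). Qed.

Lemma ex_pd_const k c z : ex_pd k (fun _ => c) z.
Proof. unfold ex_pd. cbv beta. apply ex_derive_const. Qed.

Lemma ex_pd_inv k (f : pt -> R) z : ex_pd k f z -> f z <> 0 -> ex_pd k (fun w => / f w) z.
Proof.
  intros Hf Hnz. apply (ex_derive_inv (fun t => f (upd z k t))); auto.
  rewrite upd_coord; auto.
Qed.

Lemma dy_mult i (f g : pt -> R) z : ex_pd (2 + i) f z -> ex_pd (2 + i) g z ->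
  dy i (fun w => f w * g w) z = dy i f z * g z + f z * dy i g z.
Proof. apply pd_mult. Qed.

Lemma dy_plus i (f g : pt -> R) z : ex_pd (2 + i) f z -> ex_pd (2 + i) g z ->
  dy i (fun w => f w + g w) z = dy i f z + dy i g z.
Proof. apply pd_plus. Qed.

Lemma dy_scal i c (f : pt -> R) z : dy i (fun w => c * f w) z = c * dy i f z.
Proof. apply pd_scal. Qed.

Lemma dy_const i c z : dy i (fun _ => c) z = 0.
Proof. apply (Derive_const c). Qed.

Lemma dy_ext_on (A : pt -> Prop) (f g : pt -> R) i z : open A -> A z ->
  (forall w, A w -> f w = g w) -> dy i f z = dy i g z.
Proof. intros; apply (pd_ext_on A); auto. Qed.

Lemma dy_yc i j z : (i < 2)%nat -> (j < 2)%nat ->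
  dy i (fun w => yc w j) z = if Nat.eqb i j then 1 else 0.
Proof.
  intros Hi Hj. destruct z as [b [y0 y1]].
  destruct i as [|[|i]], j as [|[|j]]; try lia; unfold dy, pd, yc; simpl;
    first [apply Derive_id | apply Derive_const].
Qed.

Lemma dv2_ext F eps m (f g : pt -> R) z :
  (forall w, f w = g w) -> dv2 F eps m f z = dv2 F eps m g z.
Proof.
  intros Hfg. unfold dv2, sum2, dy, pd.
  now rewrite (Derive_ext (fun t => f (upd z 2 t)) (fun t => g (upd z 2 t))),
              (Derive_ext (fun t => f (upd z 3 t)) (fun t => g (upd z 3 t))).
Qed.

Lemma dv2_mult F eps m (f g : pt -> R) z :
  ex_pd 2 f z -> ex_pd 3 f z -> ex_pd 2 g z -> ex_pd 3 g z ->
  dv2 F eps m (fun w => f w * g w) z = dv2 F eps m f z * g z + f z * dv2 F eps m g z.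
Proof. intros. unfold dv2, sum2. rewrite !dy_mult by auto. ring. Qed.

Lemma dv2_plus F eps m (f g : pt -> R) z :
  ex_pd 2 f z -> ex_pd 3 f z -> ex_pd 2 g z -> ex_pd 3 g z ->
  dv2 F eps m (fun w => f w + g w) z = dv2 F eps m f z + dv2 F eps m g z.
Proof. intros. unfold dv2, sum2. rewrite !dy_plus by auto. ring. Qed.

Lemma dv2_scal F eps m c (f : pt -> R) z :
  dv2 F eps m (fun w => c * f w) z = c * dv2 F eps m f z.
Proof. unfold dv2, sum2. rewrite !dy_scal. ring. Qed.

Lemma frame_dual_contractions e l0 l1 m0 m1 g00 g01 g10 g11 :
  (e = 1 \/ e = -1) ->
  g00 = l0 * l0 + e * m0 * m0 -> g01 = l0 * l1 + e * m0 * m1 ->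
  g10 = l1 * l0 + e * m1 * m0 -> g11 = l1 * l1 + e * m1 * m1 ->
  g00 * g11 - g01 * g10 <> 0 ->
  let d := g00 * g11 - g01 * g10 in
  l0 * (g11 / d * m0 + - g01 / d * m1) + l1 * (- g10 / d * m0 + g00 / d * m1) = 0 /\
  m0 * (g11 / d * m0 + - g01 / d * m1) + m1 * (- g10 / d * m0 + g00 / d * m1) = e.
Proof.
  intros He H00 H01 H10 H11 Hd d. subst d g00 g01 g10 g11.
  destruct He; subst; split; field; intro Hc; apply Hd; rewrite <- Hc; ring.
Qed.

(* Contract [F C_kij = F/2 d_k g_ij = I m_k m_i m_j] with [m^k m^i m^j]. *)
Lemma cartan_contraction e F I (L M U : nat -> R) (DL DM : nat -> nat -> R)
    (Dg : nat -> nat -> nat -> R) :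
  e * e = 1 -> L 0%nat * U 0%nat + L 1%nat * U 1%nat = 0 ->
  M 0%nat * U 0%nat + M 1%nat * U 1%nat = e ->
  (forall k i j, (k < 2)%nat -> (i < 2)%nat -> (j < 2)%nat ->
     Dg k i j = DL k i * L j + L i * DL k j + e * (DM k i * M j + M i * DM k j)) ->
  (forall k i j, (k < 2)%nat -> (i < 2)%nat -> (j < 2)%nat ->
     F * (/ 2 * Dg k i j) = I * M k * M i * M j) ->
  F * sum2 (fun k => sum2 (fun i => U k * U i * DM k i)) = I * e.
Proof.
  intros He HL HM HDg HC.
  pose (S := sum2 (fun k => sum2 (fun i => sum2 (fun j =>
               U k * U i * U j * (F * (/ 2 * Dg k i j)))))).
  assert (E1 : S = I * (M 0%nat * U 0%nat + M 1%nat * U 1%nat) ^ 3).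
  { unfold S, sum2. rewrite !HC by lia. ring. }
  assert (E2 : S = F * ((L 0%nat * U 0%nat + L 1%nat * U 1%nat)
                          * sum2 (fun k => sum2 (fun i => U k * U i * DL k i))
                        + e * (M 0%nat * U 0%nat + M 1%nat * U 1%nat)
                          * sum2 (fun k => sum2 (fun i => U k * U i * DM k i)))).
  { unfold S, sum2. rewrite !HDg by lia. field. }
  rewrite HL, HM in E2. rewrite HM, E2 in E1.
  replace (e ^ 3) with (e * e * e) in E1 by ring.
  rewrite !He in E1. nra.
Qed.

Lemma main_scalar_of_cartan e F I (M U : nat -> R) (C : nat -> nat -> nat -> R) :
  e * e = 1 -> M 0%nat * U 0%nat + M 1%nat * U 1%nat = e ->
  (forall k i j, (k < 2)%nat -> (i < 2)%nat -> (j < 2)%nat ->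
     F * C k i j = I * M k * M i * M j) ->
  I = e * sum2 (fun k => sum2 (fun i => sum2 (fun j => U k * U i * U j * (F * C k i j)))).
Proof.
  intros He HM HC. unfold sum2. rewrite !HC by lia.
  transitivity (e * (I * (M 0%nat * U 0%nat + M 1%nat * U 1%nat) ^ 3)); [|ring].
  rewrite HM. replace (e * (I * e ^ 3)) with (I * ((e * e) * (e * e))) by ring.
  rewrite He. ring.
Qed.

Lemma cross_zero_of_annihilators y0 y1 a0 a1 b0 b1 : (y0, y1) <> (0, 0) ->
  y0 * a0 + y1 * a1 = 0 -> y0 * b0 + y1 * b1 = 0 -> a0 * b1 - a1 * b0 = 0.
Proof.
  intros Hy Ha Hb. destruct (Req_dec (a0 * b1 - a1 * b0) 0) as [|Hc]; [assumption|].
  exfalso. apply Hy.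
  assert (E0 : y0 * (a0 * b1 - a1 * b0) = 0).
  { transitivity (b1 * (y0 * a0 + y1 * a1) - a1 * (y0 * b0 + y1 * b1)); [ring|].
    rewrite Ha, Hb. ring. }
  assert (E1 : y1 * (a0 * b1 - a1 * b0) = 0).
  { transitivity (a0 * (y0 * b0 + y1 * b1) - b0 * (y0 * a0 + y1 * a1)); [ring|].
    rewrite Ha, Hb. ring. }
  apply Rmult_integral in E0, E1.
  destruct E0 as [-> | ]; [|contradiction]. destruct E1 as [-> | ]; [|contradiction].
  reflexivity.
Qed.

(* Since [m_i m^i = e] and [e^2 = 1], a covector [p] parallel to [m] is [(e p_j m^j) m]. *)
Lemma parallel_of_cross_zero e m0 m1 u0 u1 p0 p1 : e * e = 1 ->
  p0 * m1 - p1 * m0 = 0 -> m0 * u0 + m1 * u1 = e -> (m0 <> 0 \/ m1 <> 0) ->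
  p0 = e * (u0 * p0 + u1 * p1) * m0 /\ p1 = e * (u0 * p0 + u1 * p1) * m1.
Proof.
  intros He Hh HM Hm.
  assert (A00 : m0 * (p0 - e * (u0 * p0 + u1 * p1) * m0)
                = m0 * p0 * (1 - e * (m0 * u0 + m1 * u1))
                  + e * m0 * u1 * (p0 * m1 - p1 * m0)) by ring.
  assert (A10 : m1 * (p0 - e * (u0 * p0 + u1 * p1) * m0)
                = p1 * m0 * (1 - e * (m0 * u0 + m1 * u1))
                  + (1 - e * m0 * u0) * (p0 * m1 - p1 * m0)) by ring.
  assert (A01 : m0 * (p1 - e * (u0 * p0 + u1 * p1) * m1)
                = p0 * m1 * (1 - e * (m0 * u0 + m1 * u1))
                  - (1 - e * m1 * u1) * (p0 * m1 - p1 * m0)) by ring.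
  assert (A11 : m1 * (p1 - e * (u0 * p0 + u1 * p1) * m1)
                = m1 * p1 * (1 - e * (m0 * u0 + m1 * u1))
                  - e * m1 * u0 * (p0 * m1 - p1 * m0)) by ring.
  rewrite HM, Hh, He in A00, A10, A01, A11.
  split; apply Rminus_diag_uniq; destruct Hm as [Hm|Hm].
  - apply (Rmult_eq_reg_l m0); auto. rewrite A00. ring.
  - apply (Rmult_eq_reg_l m1); auto. rewrite A10. ring.
  - apply (Rmult_eq_reg_l m0); auto. rewrite A01. ring.
  - apply (Rmult_eq_reg_l m1); auto. rewrite A11. ring.
Qed.

(* Once [P] and [P_;2] are eliminated, the left-hand side is
   [- e Q / rho + F^2 (a b + c - 2 h) / 2], which vanishes by the definition of [Q]. *)
Lemma conformal_identity_alg e F I a b c h s2 dQ Q :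
  (e = 1 \/ e = -1) -> s2 + e * I * a + 2 * a ^ 2 + e - a ^ 2 <> 0 ->
  Q = / 2 * (e * / (s2 + e * I * a + 2 * a ^ 2 + e - a ^ 2) * F ^ 2 * (a * b + c - 2 * h)) ->
  a * (- e * (a * Q) + / 2 * (F ^ 2 * b)) + (- e * (s2 * Q + a * dQ) + / 2 * (F ^ 2 * c))
  + e * a * dQ - (I * a + 1) * Q - F ^ 2 * h = 0.
Proof.
  intros He Hx ->. destruct He as [-> | ->]; field; contradict Hx; rewrite <- Hx; ring.
Qed.

Section ConformalChange.

Variables (A : pt -> Prop) (F : pt -> R) (eps : R) (m : nat -> pt -> R) (I phi : pt -> R).

Hypothesis A_conic : conic A.
Hypothesis F_smooth : smooth_on A F.
Hypothesis F_homog : homog 1 A F.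
Hypothesis F_neq0 : forall z, A z -> F z <> 0.
Hypothesis detg_neq0 : forall z, A z -> detg F z <> 0.
Hypothesis eps_sign : eps = 1 \/ eps = -1.
Hypothesis m0_smooth : smooth_on A (m 0%nat).
Hypothesis m1_smooth : smooth_on A (m 1%nat).
Hypothesis g_frame : forall i j z, (i < 2)%nat -> (j < 2)%nat -> A z ->
  g F i j z = ell F i z * ell F j z + eps * m i z * m j z.
Hypothesis cartan_frame : forall i j k z, (i < 2)%nat -> (j < 2)%nat -> (k < 2)%nat -> A z ->
  F z * Cijk F i j k z = I z * m i z * m j z * m k z.
Hypothesis phi_smooth : smooth_on A phi.
Hypothesis phi_homog : homog 0 A phi.

Let A_open : open A := proj1 A_conic.

Create HintDb smooth.

Ltac smooth_step := first
  [ assumption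
  | solve [auto with smooth]
  | apply smooth_on_const | apply smooth_on_yc | apply smooth_on_pd
  | apply smooth_on_plus | apply smooth_on_minus | apply smooth_on_mult
  | apply smooth_on_opp | apply smooth_on_pow
  | apply smooth_on_inv; [assumption|assumption|] ].

Lemma smooth_F2 : smooth_on A (F2 F).
Proof. unfold F2. repeat smooth_step. Qed.
#[local] Hint Resolve smooth_F2 : smooth.

Lemma smooth_g i j : smooth_on A (g F i j).
Proof. unfold g. repeat smooth_step. Qed.
#[local] Hint Resolve smooth_g : smooth.

Lemma smooth_ginv i j : smooth_on A (ginv F i j).
Proof.
  assert (smooth_on A (detg F)) by (unfold detg; repeat smooth_step).
  destruct i as [|[|i]], j as [|[|j]]; unfold ginv; repeat smooth_step.
Qed.
#[local] Hint Resolve smooth_ginv : smooth.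

Lemma smooth_mu i : smooth_on A (mu F m i).
Proof. unfold mu, sum2. repeat smooth_step. Qed.
#[local] Hint Resolve smooth_mu : smooth.

Lemma smooth_Gs i : smooth_on A (Gs F i).
Proof. unfold Gs, sum2. repeat smooth_step. Qed.
#[local] Hint Resolve smooth_Gs : smooth.

Lemma smooth_Cijk i j k : smooth_on A (Cijk F i j k).
Proof. unfold Cijk. repeat smooth_step. Qed.
#[local] Hint Resolve smooth_Cijk : smooth.

Lemma smooth_dv2 f : smooth_on A f -> smooth_on A (dv2 F eps m f).
Proof. intros. unfold dv2, sum2. repeat smooth_step. Qed.

Lemma smooth_dh1 f : smooth_on A f -> smooth_on A (dh1 F f).
Proof. intros. unfold dh1, ellu, delta, Gji, sum2. repeat smooth_step. Qed.

Lemma smooth_dh2 f : smooth_on A f -> smooth_on A (dh2 F eps m f).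
Proof. intros. unfold dh2, delta, Gji, sum2. repeat smooth_step. Qed.

Ltac solve_smooth :=
  solve [repeat first [ smooth_step | apply smooth_dv2 | apply smooth_dh1 | apply smooth_dh2 ]].

Ltac solve_ex_pd :=
  match goal with Hz : A ?z |- ex_pd _ _ ?z =>
    apply (smooth_on_ex_pd A); [solve_smooth | exact Hz]
  end.

Lemma eps_sqr : eps * eps = 1.
Proof. destruct eps_sign as [He|He]; rewrite He; ring. Qed.

Lemma frame_duality z : A z ->
  ell F 0 z * mu F m 0 z + ell F 1 z * mu F m 1 z = 0 /\
  m 0%nat z * mu F m 0 z + m 1%nat z * mu F m 1 z = eps.
Proof.
  intros Hz. pose proof (detg_neq0 z Hz) as Hd. unfold detg in Hd.
  unfold mu, sum2, ginv.
  apply (frame_dual_contractions eps (ell F 0 z) (ell F 1 z) (m 0%nat z) (m 1%nat z));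
    auto; apply g_frame; auto.
Qed.

Lemma yc_ell z : A z -> yc z 0 * ell F 0 z + yc z 1 * ell F 1 z = F z.
Proof.
  intros Hz. pose proof (homog_euler A F 1 z A_conic F_smooth F_homog Hz) as H.
  unfold ell. simpl INR in H. lra.
Qed.

Lemma yc_dy_phi z : A z -> yc z 0 * dy 0 phi z + yc z 1 * dy 1 phi z = 0.
Proof.
  intros Hz. pose proof (homog_euler A phi 0 z A_conic phi_smooth phi_homog Hz) as H.
  simpl INR in H. lra.
Qed.

Lemma dy_F2 j z : A z -> dy j (F2 F) z = 2 * F z * ell F j z.
Proof. intros Hz. apply pd_sqr. solve_ex_pd. Qed.

(* Differentiate the Euler relation [y^j d_j F^2 = 2 F^2] in [y^i]. *)
Lemma yc_g i z : (i < 2)%nat -> A z ->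
  yc z 0 * g F i 0 z + yc z 1 * g F i 1 z = F z * ell F i z.
Proof.
  intros Hi Hz.
  set (G := fun w => yc w 0 * dy 0 (F2 F) w + yc w 1 * dy 1 (F2 F) w).
  assert (HG : forall w, A w -> G w = 2 * F2 F w).
  { intros w Hw. unfold G. rewrite !dy_F2 by auto.
    transitivity (2 * F w * (yc w 0 * ell F 0 w + yc w 1 * ell F 1 w)); [ring|].
    rewrite yc_ell by auto. unfold F2. ring. }
  assert (E : dy i G z = 2 * dy i (F2 F) z).
  { rewrite (dy_ext_on A G (fun w => 2 * F2 F w)) by auto. apply dy_scal. }
  unfold G in E. rewrite dy_plus, !dy_mult, !dy_yc in E by (auto || solve_ex_pd).
  rewrite !dy_F2 in E by auto. unfold g.
  destruct i as [|[|i]]; [simpl in E; lra | simpl in E; lra | lia].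
Qed.

Lemma m_neq0 z : A z -> m 0%nat z <> 0 \/ m 1%nat z <> 0.
Proof.
  intros Hz.
  destruct (Req_dec (m 0%nat z) 0) as [H0|H0]; [|left; auto].
  destruct (Req_dec (m 1%nat z) 0) as [H1|H1]; [|right; auto].
  exfalso. apply (detg_neq0 z Hz). unfold detg. rewrite !g_frame by auto.
  rewrite H0, H1. ring.
Qed.

Lemma yc_m z : A z -> yc z 0 * m 0%nat z + yc z 1 * m 1%nat z = 0.
Proof.
  intros Hz. set (s := yc z 0 * m 0%nat z + yc z 1 * m 1%nat z).
  assert (Hms : forall i, (i < 2)%nat -> m i z * s = 0).
  { intros i Hi. pose proof (yc_g i z Hi Hz) as H. rewrite !g_frame in H by auto.
    pose proof (yc_ell z Hz) as Hl.
    apply (Rmult_eq_reg_l eps); [|destruct eps_sign; lra].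
    transitivity ((yc z 0 * (ell F i z * ell F 0 z + eps * m i z * m 0%nat z)
                   + yc z 1 * (ell F i z * ell F 1 z + eps * m i z * m 1%nat z))
                  - ell F i z * (yc z 0 * ell F 0 z + yc z 1 * ell F 1 z)).
    { unfold s. ring. }
    rewrite H, Hl. ring. }
  destruct (m_neq0 z Hz) as [Hm|Hm].
  - apply (Rmult_eq_reg_l (m 0%nat z)); auto. rewrite Hms; auto. ring.
  - apply (Rmult_eq_reg_l (m 1%nat z)); auto. rewrite Hms; auto. ring.
Qed.

Lemma dy_phi_parallel z : A z ->
  dy 0 phi z = eps * (mu F m 0 z * dy 0 phi z + mu F m 1 z * dy 1 phi z) * m 0%nat z /\
  dy 1 phi z = eps * (mu F m 0 z * dy 0 phi z + mu F m 1 z * dy 1 phi z) * m 1%nat z.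
Proof.
  intros Hz. apply parallel_of_cross_zero; [exact eps_sqr| |apply frame_duality; auto|].
  - apply (cross_zero_of_annihilators (yc z 0) (yc z 1)); [|apply yc_dy_phi|apply yc_m]; auto.
    destruct z as [b [y0 y1]]. exact (proj1 (proj2 A_conic) _ Hz).
  - apply m_neq0; auto.
Qed.

Lemma main_scalar_contraction z : A z ->
  F z * sum2 (fun k => sum2 (fun i => mu F m k z * mu F m i z * dy k (m i) z)) = I z * eps.
Proof.
  intros Hz. destruct (frame_duality z Hz) as [Hl Hm].
  assert (Hsm : forall i, (i < 2)%nat -> smooth_on A (m i)).
  { intros [|[|i]] Hi; [auto|auto|lia]. }
  apply (cartan_contraction eps (F z) (I z) (fun i => ell F i z) (fun i => m i z)
           (fun i => mu F m i z) (fun k i => dy k (ell F i) z) (fun k i => dy k (m i) z)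
           (fun k i j => dy k (g F i j) z)); auto using eps_sqr.
  - intros k i j Hk Hi Hj. cbv beta. pose proof (Hsm i Hi). pose proof (Hsm j Hj).
    rewrite (dy_ext_on A (g F i j) (fun w => ell F i w * ell F j w + eps * m i w * m j w))
      by (auto; intros; apply g_frame; auto).
    rewrite dy_plus, !dy_mult, dy_const by solve_ex_pd. ring.
  - intros k i j Hk Hi Hj. cbv beta. rewrite <- (cartan_frame k i j z) by auto.
    unfold Cijk, g. rewrite dy_scal. field.
Qed.

Lemma smooth_I : smooth_on A I.
Proof.
  apply (smooth_on_ext A A_open (fun w => eps * sum2 (fun k => sum2 (fun i => sum2 (fun j =>
           mu F m k w * mu F m i w * mu F m j w * (F w * Cijk F k i j w)))))).
  - intros w Hw. symmetry.
    apply (main_scalar_of_cartan eps (F w) (I w) (fun i => m i w) (fun i => mu F m i w)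
             (fun k i j => Cijk F k i j w)); [exact eps_sqr|apply frame_duality; auto|].
    intros; apply cartan_frame; auto.
  - unfold sum2. solve_smooth.
Qed.
#[local] Hint Resolve smooth_I : smooth.

Lemma dy_mu_m i z : (i < 2)%nat -> A z ->
  dy i (mu F m 0) z * m 0%nat z + dy i (mu F m 1) z * m 1%nat z
  = - (mu F m 0 z * dy i (m 0%nat) z + mu F m 1 z * dy i (m 1%nat) z).
Proof.
  intros Hi Hz.
  assert (E : dy i (fun w => m 0%nat w * mu F m 0 w + m 1%nat w * mu F m 1 w) z = 0).
  { rewrite (dy_ext_on A _ (fun _ => eps)) by (auto; intros w Hw; apply frame_duality; auto).
    apply dy_const. }
  rewrite dy_plus, !dy_mult in E by solve_ex_pd. lra.
Qed.

Lemma dy_dv2 f i z : smooth_on A f -> A z ->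
  dy i (dv2 F eps m f) z
  = eps * (ell F i z * (mu F m 0 z * dy 0 f z + mu F m 1 z * dy 1 f z)
           + F z * ((dy i (mu F m 0) z * dy 0 f z + dy i (mu F m 1) z * dy 1 f z)
                    + (mu F m 0 z * dy i (dy 0 f) z + mu F m 1 z * dy i (dy 1 f) z))).
Proof.
  intros Hf Hz. unfold dv2, sum2.
  rewrite dy_mult, dy_scal, dy_plus, !dy_mult by solve_ex_pd. unfold ell. ring.
Qed.

Lemma dv2_dv2_phi z : A z ->
  dv2 F eps m (dv2 F eps m phi) z
  = F z ^ 2 * sum2 (fun i => sum2 (fun j => mu F m i z * mu F m j z * dy i (dy j phi) z))
    - eps * I z * dv2 F eps m phi z.
Proof.
  intros Hz. destruct (frame_duality z Hz) as [Hl _].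
  pose proof (main_scalar_contraction z Hz) as HX.
  set (psi := mu F m 0 z * dy 0 phi z + mu F m 1 z * dy 1 phi z).
  assert (Hmix : forall k, (k < 2)%nat ->
            dy k (mu F m 0) z * dy 0 phi z + dy k (mu F m 1) z * dy 1 phi z
            = - eps * psi * (mu F m 0 z * dy k (m 0%nat) z + mu F m 1 z * dy k (m 1%nat) z)).
  { intros k Hk. destruct (dy_phi_parallel z Hz) as [P0 P1]. fold psi in P0, P1.
    rewrite P0, P1.
    transitivity (eps * psi * (dy k (mu F m 0) z * m 0%nat z + dy k (mu F m 1) z * m 1%nat z));
      [ring|].
    rewrite dy_mu_m by auto. ring. }
  change (dv2 F eps m (dv2 F eps m phi) z) with
    (eps * F z * (mu F m 0 z * dy 0 (dv2 F eps m phi) z + mu F m 1 z * dy 1 (dv2 F eps m phi) z)).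
  rewrite !dy_dv2, !Hmix by auto.
  apply Rminus_diag_uniq.
  transitivity (eps * eps * F z * psi * (ell F 0 z * mu F m 0 z + ell F 1 z * mu F m 1 z)
    - eps * eps * eps * F z * psi
      * (F z * sum2 (fun k => sum2 (fun i => mu F m k z * mu F m i z * dy k (m i) z)) - I z * eps)
    + (eps * eps - 1) * F z ^ 2
      * sum2 (fun i => sum2 (fun j => mu F m i z * mu F m j z * dy i (dy j phi) z))
    + eps * eps * (1 - eps * eps) * F z * psi * I z).
  { unfold dv2, psi, sum2. ring. }
  rewrite Hl, HX, eps_sqr. ring.
Qed.

Lemma rho_denominator z : A z ->
  Defs.sigma F eps m I phi z + eps - dv2 F eps m phi z ^ 2
  = F z ^ 2 * sum2 (fun i => sum2 (fun j =>
      (dy i (dy j phi) z + dy i phi z * dy j phi z) * mu F m i z * mu F m j z)) + eps.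
Proof.
  intros Hz. unfold Defs.sigma. rewrite dv2_dv2_phi by auto.
  apply Rminus_diag_uniq.
  transitivity ((eps * eps - 1) * (F z * (mu F m 0 z * dy 0 phi z + mu F m 1 z * dy 1 phi z)) ^ 2).
  { unfold dv2, sum2. ring. }
  rewrite eps_sqr. ring.
Qed.

Lemma dv2_F2 z : A z -> dv2 F eps m (F2 F) z = 0.
Proof.
  intros Hz. destruct (frame_duality z Hz) as [Hl _].
  unfold dv2, sum2. rewrite !dy_F2 by auto.
  transitivity (2 * eps * F z * F z * (ell F 0 z * mu F m 0 z + ell F 1 z * mu F m 1 z)); [ring|].
  rewrite Hl. ring.
Qed.

Lemma Pc_eq w :
  Pc F eps m I phi w
  = - eps * (dv2 F eps m phi w * Qc F eps m I phi w) + / 2 * (F2 F w * dh1 F phi w).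
Proof. unfold Pc, Qc, F2. destruct eps_sign as [He|He]; rewrite He; field. Qed.

Lemma ex_pd_Qc k z : A z -> Defs.sigma F eps m I phi z + eps - dv2 F eps m phi z ^ 2 <> 0 ->
  ex_pd k (Qc F eps m I phi) z.
Proof.
  intros Hz Hx. unfold Qc, Defs.rho.
  apply ex_pd_mult; [apply ex_pd_const|].
  apply ex_pd_mult; [|solve_ex_pd].
  apply ex_pd_mult; [|solve_ex_pd].
  apply ex_pd_mult; [apply ex_pd_const|].
  apply ex_pd_inv; [solve_ex_pd|exact Hx].
Qed.

Lemma dv2_Pc z : A z -> Defs.sigma F eps m I phi z + eps - dv2 F eps m phi z ^ 2 <> 0 ->
  dv2 F eps m (Pc F eps m I phi) z
  = - eps * (dv2 F eps m (dv2 F eps m phi) z * Qc F eps m I phi z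
             + dv2 F eps m phi z * dv2 F eps m (Qc F eps m I phi) z)
    + / 2 * (F z ^ 2 * dv2 F eps m (dh1 F phi) z).
Proof.
  intros Hz Hx. rewrite (dv2_ext _ _ _ _ _ z Pc_eq).
  assert (HQ : forall k, ex_pd k (Qc F eps m I phi) z) by (intros; apply ex_pd_Qc; auto).
  rewrite dv2_plus, !dv2_scal, !dv2_mult, dv2_F2 by
    (solve [auto] || solve_ex_pd || (apply ex_pd_mult; [apply ex_pd_const|];
                                     apply ex_pd_mult; [solve_ex_pd|auto])).
  unfold F2. ring.
Qed.

End ConformalChange.

Theorem lemma2p8 (A : pt -> Prop) (F : pt -> R) (eps : R)
  (m : nat -> pt -> R) (I phi : pt -> R) :
  conic A ->
  smooth_on A F -> homog 1 A F ->
  (forall z, A z -> F z <> 0) ->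
  (forall z, A z -> detg F z <> 0) ->
  (eps = 1 \/ eps = -1) ->
  smooth_on A (m 0%nat) -> smooth_on A (m 1%nat) ->
  (forall i j z, (i < 2)%nat -> (j < 2)%nat -> A z ->
     g F i j z = ell F i z * ell F j z + eps * m i z * m j z) ->
  (forall i j k z, (i < 2)%nat -> (j < 2)%nat -> (k < 2)%nat -> A z ->
     F z * Cijk F i j k z = I z * m i z * m j z * m k z) ->
  smooth_on A phi -> homog 0 A phi ->
  (forall z, A z ->
     F z ^ 2 * sum2 (fun i => sum2 (fun j =>
        (dy i (dy j phi) z + dy i phi z * dy j phi z) * mu F m i z * mu F m j z))
     + eps <> 0) ->
  forall z, A z ->
    dv2 F eps m phi z * Pc F eps m I phi z
    + dv2 F eps m (Pc F eps m I phi) z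
    + eps * dv2 F eps m phi z * dv2 F eps m (Qc F eps m I phi) z
    - (I z * dv2 F eps m phi z + 1) * Qc F eps m I phi z
    - F z ^ 2 * dh2 F eps m phi z = 0.
Proof.
  intros Hconic HF HF1 HFnz Hdet Heps Hm0 Hm1 Hg HC Hphi Hphi0 Hnd z Hz.
  assert (Hx : Defs.sigma F eps m I phi z + eps - dv2 F eps m phi z ^ 2 <> 0).
  { erewrite rho_denominator by eauto. apply Hnd, Hz. }
  rewrite (Pc_eq F eps m I phi Heps), (dv2_Pc A) by eauto.
  apply conformal_identity_alg; auto.
Qed.
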